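(* Let $r>0$, $\delta>0$, $R:=r/\delta$, and suppose $R+\tfrac12\in\mathbb{Z}$. Then for every unit-norm tight frame $\mathcal{F}$ of $\mathbb{R}^2$, $$\mathcal{E}_\delta(r,\mathcal{F})\ge \frac{32}{3\pi^{5/2}}\,\frac{\delta^{3/2}}{\sqrt r}.$$
   Context: A finite family $\mathcal{F}=\{e_j\}_{j=1}^N\subset\mathbb{R}^2$ is a unit-norm tight frame if $\|e_j\|=1$ for all $j$ and $\sum_j e_je_j^T=\frac{N}{2}I_2$. For $\delta>0$, $Q_\delta(t):=\delta\lfloor t/\delta+1/2\rfloor$, and $E_\delta(x,\mathcal{F}):=\bigl\|x-\frac{2}{N}\sum_{j=1}^N Q_\delta(\langle x,e_j\rangle)e_j\bigr\|$ (Euclidean norm). For $r>0$ set $x_\psi:=r[\cos\psi,\sin\psi]^T$ and $$\mathcal{E}_\delta(r,\mathcal{F}):=\Bigl(\int_0^{2\pi}E_\delta(x_\psi,\mathcal{F})^2\,d\psi\Bigr)^{1/2}.$$ *)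

From Stdlib Require Import Reals Lra Lia ZArith List.
Open Scope R_scope.

(* floor function: Int_part x = up x - 1 is the greatest integer <= x *)
Definition Rfloor (x : R) : R := IZR (up x - 1).

Definition Qd (delta t : R) : R := delta * Rfloor (t / delta + / 2).

Definition sumN (N : nat) (f : nat -> R) : R :=
  fold_right Rplus 0 (map f (seq 0 N)).

(* A family {e_j}_{j<N} in R^2, given by coordinate functions ex, ey,
   is a unit-norm tight frame: ||e_j|| = 1 and sum_j e_j e_j^T = N/2 I_2. *)
Definition is_UNTF (N : nat) (ex ey : nat -> R) : Prop :=
  (forall j, (j < N)%nat -> sqrt (ex j ^ 2 + ey j ^ 2) = 1) /\
  sumN N (fun j => ex j * ex j) = INR N / 2 /\
  sumN N (fun j => ex j * ey j) = 0 /\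
  sumN N (fun j => ey j * ex j) = 0 /\
  sumN N (fun j => ey j * ey j) = INR N / 2.

Definition Edelta (delta : R) (N : nat) (ex ey : nat -> R) (x1 x2 : R) : R :=
  let c := fun j => Qd delta (x1 * ex j + x2 * ey j) in
  let y1 := x1 - 2 / INR N * sumN N (fun j => c j * ex j) in
  let y2 := x2 - 2 / INR N * sumN N (fun j => c j * ey j) in
  sqrt (y1 ^ 2 + y2 ^ 2).

Definition Esq_integrand (delta r : R) (N : nat) (ex ey : nat -> R) (psi : R) : R :=
  Edelta delta N ex ey (r * cos psi) (r * sin psi) ^ 2.

From Stdlib Require Import Reals Lra Lia ZArith List RList.
From Coquelicot Require Import Coquelicot.
Open Scope R_scope.

(* Write x = r u with |u| = 1, t_j = <x, e_j> and y = x - (2/N) sum_j Q(t_j) e_j, so that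
   E(x)^2 = |y|^2.  The tight frame identity sum_j t_j^2 = (N/2) |x|^2 turns the projection
   of the error onto x into <x, y> = (2/N) sum_j t_j (t_j - Q(t_j)), and |y - lam x|^2 >= 0
   gives |y|^2 >= 2 lam <x, y> - lam^2 r^2 for every lam.

   With e_j = (cos th, sin th) we have t_j = r cos (psi - th), so by periodicity every term
   integrates over psi to I = int_{-PI}^{PI} r cos phi (r cos phi - Q (r cos phi)) dphi.
   Because r + delta/2 is a multiple of delta, [0, PI] splits at the angles where r cos phi
   crosses a discontinuity of Q, and on each piece Q(r cos phi) is the mean of r cos phi at
   the two endpoints; a piece of length d then contributes exactly r^2 (d - sin d) / 2 >= 0.
   The two caps around 0 and PI alone give I >= 16 sqrt 2 / (3 PI^2) delta^(3/2) sqrt r,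
   and optimising lam yields the bound. *)

(** * Riemann integrability of squares *)

Lemma adapted_couple_comp (g f : R -> R) a b l lf :
  adapted_couple f a b l lf -> adapted_couple (fun x => g (f x)) a b l (map g lf).
Proof.
  intros (Hord & Hmin & Hmax & Hlen & Hcst); repeat split; try assumption.
  - rewrite length_map; exact Hlen.
  - intros i Hi x Hx; rewrite (Hcst i Hi x Hx), RList_P12; [reflexivity|].
    rewrite Hlen in Hi; simpl in Hi; lia.
Qed.

Lemma Riemann_integrable_comp_lipschitz (f g : R -> R) a b L :
  0 <= L -> (forall x y, Rabs (g x - g y) <= L * Rabs (x - y)) ->
  Riemann_integrable f a b -> Riemann_integrable (fun x => g (f x)) a b.
Proof.
  intros HL Hg pr eps.
  assert (Heps : 0 < eps / (L + 1)) by (apply Rdiv_lt_0_compat; [apply cond_pos | lra]).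
  destruct (pr (mkposreal _ Heps)) as [phi [psi [Happrox Hpsi]]].
  exists (mkStepFun (existT _ (subdivision phi)
            (existT _ (map g (subdivision_val phi))
               (adapted_couple_comp g _ _ _ _ _ (StepFun_P1 phi))))).
  exists (mkStepFun (StepFun_P28 L (mkStepFun (StepFun_P4 a b 0)) psi)).
  split.
  - intros t Ht; simpl; unfold fct_cte.
    specialize (Happrox t Ht); eapply Rle_trans; [apply Hg | nra].
  - rewrite StepFun_P30, StepFun_P18, Rmult_0_l, Rplus_0_l, Rabs_mult, (Rabs_pos_eq L HL).
    simpl in Hpsi.
    assert (L * (eps / (L + 1)) < eps).
    { pose proof (cond_pos eps); apply Rmult_lt_reg_r with (L + 1); [lra|].
      field_simplify; lra. }
    nra.
Qed.

Definition clamp (B x : R) : R := Rmax (- B) (Rmin B x).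

Ltac destruct_Rmin_Rmax :=
  unfold Rmax, Rmin; repeat match goal with
  | |- context [Rle_dec ?a ?b] => destruct (Rle_dec a b)
  | _ : context [Rle_dec ?a ?b] |- _ => destruct (Rle_dec a b)
  end.

Lemma clamp_lipschitz B x y : Rabs (clamp B x - clamp B y) <= Rabs (x - y).
Proof. unfold clamp; destruct_Rmin_Rmax; split_Rabs; lra. Qed.

Lemma clamp_bound B x : 0 <= B -> Rabs (clamp B x) <= B.
Proof. intros; unfold clamp; destruct_Rmin_Rmax; split_Rabs; lra. Qed.

Lemma clamp_id B x : Rabs x <= B -> clamp B x = x.
Proof. intros; unfold clamp; destruct_Rmin_Rmax; split_Rabs; lra. Qed.

(* Integrable functions are bounded, and x^2 is Lipschitz on bounded sets:
   clamping makes it globally Lipschitz without changing f^2. *)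
Lemma ex_RInt_square (f : R -> R) a b : ex_RInt f a b -> ex_RInt (fun x => f x ^ 2) a b.
Proof.
  intros If; destruct (ex_RInt_ub f a b If) as [B HB].
  assert (HB0 : 0 <= B).
  { apply Rle_trans with (Rabs (f a)); [apply Rabs_pos|].
    apply HB; unfold Rmin, Rmax; destruct (Rle_dec a b); lra. }
  apply ex_RInt_Reals_1.
  apply Riemann_integrable_ext with (f := fun x => clamp B (f x) ^ 2).
  { intros x Hx; rewrite clamp_id; [reflexivity | exact (HB x Hx)]. }
  apply (Riemann_integrable_comp_lipschitz f (fun z => clamp B z ^ 2) a b (2 * B));
    [lra | | exact (ex_RInt_Reals_0 _ _ _ If)].
  intros x y.
  pose proof (clamp_lipschitz B x y); pose proof (clamp_bound B x HB0); pose proof (clamp_bound B y HB0).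
  replace (clamp B x ^ 2 - clamp B y ^ 2) with
    ((clamp B x - clamp B y) * (clamp B x + clamp B y)) by ring.
  rewrite Rabs_mult.
  pose proof (Rabs_triang (clamp B x) (clamp B y)).
  pose proof (Rabs_pos (clamp B x - clamp B y)); pose proof (Rabs_pos (clamp B x + clamp B y)).
  nra.
Qed.

(** * Finite sums and integrals over unions of intervals *)

Lemma fold_right_Rplus_init (c : R) l : fold_right Rplus c l = fold_right Rplus 0 l + c.
Proof. induction l as [|x l IH]; simpl; [ring | rewrite IH; ring]. Qed.

Lemma sumN_O f : sumN 0 f = 0.
Proof. reflexivity. Qed.

Lemma sumN_S N f : sumN (S N) f = sumN N f + f N.
Proof.
  unfold sumN; rewrite seq_S, map_app, fold_right_app; simpl.
  rewrite fold_right_Rplus_init; ring.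
Qed.

Lemma sumN_ext N f g : (forall j, (j < N)%nat -> f j = g j) -> sumN N f = sumN N g.
Proof.
  induction N as [|N IH]; intros H; [reflexivity|].
  rewrite !sumN_S, (H N) by lia.
  rewrite IH; [reflexivity | intros j Hj; apply H; lia].
Qed.

Lemma sumN_plus N f g : sumN N (fun j => f j + g j) = sumN N f + sumN N g.
Proof. induction N as [|N IH]; [rewrite !sumN_O; ring | rewrite !sumN_S, IH; ring]. Qed.

Lemma sumN_scal N k f : sumN N (fun j => k * f j) = k * sumN N f.
Proof. induction N as [|N IH]; [rewrite !sumN_O; ring | rewrite !sumN_S, IH; ring]. Qed.

Lemma sumN_ge_const N c f : (forall j, (j < N)%nat -> c <= f j) -> INR N * c <= sumN N f.
Proof.
  induction N as [|N IH]; intros H; [rewrite sumN_O; simpl; lra|].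
  rewrite sumN_S, S_INR, Rmult_plus_distr_r, Rmult_1_l. specialize (IH (fun j Hj => H j ltac:(lia))).
  specialize (H N ltac:(lia)). lra.
Qed.

Lemma sumN_ge_first_last N f : (2 <= N)%nat -> (forall j, (j < N)%nat -> 0 <= f j) ->
  f 0%nat + f (N - 1)%nat <= sumN N f.
Proof.
  intros HN Hf.
  assert (Hhead : forall n, (1 <= n <= N)%nat -> f 0%nat <= sumN n f).
  { induction n as [|n IH]; intros Hn; [lia|].
    rewrite sumN_S. destruct n as [|n]; [rewrite sumN_O; lra|].
    specialize (IH ltac:(lia)). specialize (Hf (S n) ltac:(lia)). lra. }
  destruct N as [|N]; [lia|].
  rewrite sumN_S. replace (S N - 1)%nat with N by lia.
  specialize (Hhead N ltac:(lia)). lra.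
Qed.

Lemma is_RInt_sumN (F : nat -> R -> R) (I : nat -> R) N a b :
  (forall j, (j < N)%nat -> is_RInt (F j) a b (I j)) ->
  is_RInt (fun x => sumN N (fun j => F j x)) a b (sumN N I).
Proof.
  induction N as [|N IH]; intros H.
  - replace (sumN 0 I) with ((b - a) * 0) by (rewrite sumN_O; ring).
    exact (is_RInt_const a b 0).
  - apply is_RInt_ext with (fun x => sumN N (fun j => F j x) + F N x).
    { intros x _; rewrite sumN_S; reflexivity. }
    rewrite sumN_S.
    exact (is_RInt_plus _ _ _ _ _ _ (IH (fun j Hj => H j ltac:(lia))) (H N ltac:(lia))).
Qed.

Lemma is_RInt_chain (f : R -> R) (b v : nat -> R) n :
  (forall k, (k < n)%nat -> is_RInt f (b k) (b (S k)) (v k)) ->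
  is_RInt f (b 0%nat) (b n) (sumN n v).
Proof.
  induction n as [|n IH]; intros H.
  - exact (is_RInt_point f (b 0%nat)).
  - rewrite sumN_S.
    exact (is_RInt_Chasles _ _ _ _ _ _ (IH (fun k Hk => H k ltac:(lia))) (H n ltac:(lia))).
Qed.

Lemma is_RInt_translate (f : R -> R) a b v (l : R) :
  is_RInt f (a + v) (b + v) l -> is_RInt (fun x => f (x + v)) a b l.
Proof.
  intros Hf.
  assert (H := is_RInt_comp_lin f 1 v a b l).
  rewrite !Rmult_1_l in H.
  apply is_RInt_ext with (2 := H Hf).
  intros x _; rewrite !Rmult_1_l; reflexivity.
Qed.

Lemma is_RInt_periodic (f : R -> R) T c a (l : R) :
  (forall x, f (x + T) = f x) -> c <= a <= c + T ->
  is_RInt f c (c + T) l -> is_RInt (fun x => f (x + a)) 0 T l.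
Proof.
  intros Hper Ha Hf.
  assert (Hex : ex_RInt f c (c + T)) by (exists l; exact Hf).
  assert (H1 := RInt_correct f c a (ex_RInt_Chasles_1 f c a (c + T) Ha Hex)).
  assert (H2 := RInt_correct f a (c + T) (ex_RInt_Chasles_2 f c a (c + T) Ha Hex)).
  assert (Hl : l = RInt f c a + RInt f a (c + T)).
  { rewrite <- (is_RInt_unique f c (c + T) l Hf).
    exact (is_RInt_unique _ _ _ _ (is_RInt_Chasles _ _ _ _ _ _ H1 H2)). }
  assert (H1' : is_RInt f (c + T) (a + T) (RInt f c a)).
  { apply is_RInt_ext with (fun x => f (x + - T)).
    { intros x _; rewrite <- (Hper (x + - T)); f_equal; ring. }
    apply is_RInt_translate; replace (c + T + - T) with c by ring;
      replace (a + T + - T) with a by ring; exact H1. }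
  apply is_RInt_translate; rewrite Rplus_0_l, (Rplus_comm T a), Hl, (Rplus_comm (RInt f c a)).
  exact (is_RInt_Chasles _ _ _ _ _ _ H2 H1').
Qed.

Lemma is_RInt_even (f : R -> R) a (l : R) :
  (forall x, f (- x) = f x) -> is_RInt f 0 a l -> is_RInt f (- a) a (2 * l).
Proof.
  intros Heven Hf.
  assert (Hneg : is_RInt f (- a) 0 l).
  { assert (H := is_RInt_comp_lin f (-1) 0 (- a) 0 (opp l)).
    replace (-1 * - a + 0) with a in H by ring; replace (-1 * 0 + 0) with 0 in H by ring.
    apply is_RInt_swap in Hf.
    apply (is_RInt_ext (fun y => opp (scal (-1) (f (-1 * y + 0))))).
    { intros x _. replace (-1 * x + 0) with (- x) by ring.
      rewrite Heven. change (- (-1 * f x) = f x). ring. }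
    replace l with (opp (opp l)) by (apply (opp_opp (G := R_AbelianGroup))).
    exact (is_RInt_opp _ _ _ _ (H Hf)). }
  replace (2 * l) with (l + l) by ring.
  exact (is_RInt_Chasles _ _ _ _ _ _ Hneg Hf).
Qed.

(** * Trigonometry and the quantizer *)

Lemma is_RInt_cos_midpoint r a b :
  is_RInt (fun phi => r * cos phi * (r * cos phi - r * (cos a + cos b) / 2)) a b
    (r ^ 2 * (b - a - sin (b - a)) / 2).
Proof.
  set (q := r * (cos a + cos b) / 2).
  set (F := fun phi => r ^ 2 * (phi / 2 + sin (2 * phi) / 4) - q * r * sin phi).
  replace (r ^ 2 * (b - a - sin (b - a)) / 2) with (F b - F a).
  - apply (is_RInt_derive F).
    + intros x _; unfold F; auto_derive; [trivial | rewrite cos_2a_cos; field].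
    + intros x _; apply continuity_pt_filterlim; reg.
  - unfold F, q; rewrite !sin_2a, sin_minus; field.
Qed.

Lemma sub_sin_mono x y : x <= y -> x - sin x <= y - sin y.
Proof.
  intros Hxy.
  destruct (Rle_dec 2 (y - x)) as [Hfar | Hnear].
  - pose proof (SIN_bound x); pose proof (SIN_bound y); lra.
  - (* sin y - sin x = 2 cos((y+x)/2) sin z with z = (y-x)/2 in [0, 1], where 0 <= sin z <= z *)
    set (z := (y - x) / 2).
    assert (Hz : 0 <= z <= 1) by (unfold z; lra).
    assert (Hsinz : 0 <= sin z <= z).
    { split.
      - apply sin_ge_0; pose proof PI2_3_2; lra.
      - destruct (Rle_lt_or_eq_dec 0 z (proj1 Hz)) as [Hpos | <-].
        + apply Rlt_le, sin_lt_x, Hpos.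
        + rewrite sin_0; lra. }
    pose proof (form4 y x) as Hform; fold z in Hform.
    pose proof (COS_bound ((y + x) / 2)).
    assert (y - x = 2 * z) by (unfold z; field).
    nra.
Qed.

Lemma sin_sq_le_sq z : sin z ^ 2 <= z ^ 2.
Proof.
  assert (Hsmall : forall w, 0 <= w <= 1 -> 0 <= sin w <= w).
  { intros w Hw; split.
    - apply sin_ge_0; pose proof PI2_3_2; lra.
    - pose proof (sub_sin_mono 0 w (proj1 Hw)); rewrite sin_0 in *; lra. }
  destruct (Rle_dec 1 (Rabs z)) as [Hbig | Hlt].
  - pose proof (SIN_bound z); rewrite <- (pow2_abs z); nra.
  - destruct (Rle_dec 0 z).
    + specialize (Hsmall z ltac:(split_Rabs; lra)); nra.
    + specialize (Hsmall (- z) ltac:(split_Rabs; lra)); rewrite sin_neg in Hsmall; nra.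
Qed.

Lemma cos_ge_1_sub_sq_half x : 1 - x ^ 2 / 2 <= cos x.
Proof.
  replace x with (2 * (x / 2)) at 2 by field.
  rewrite cos_2a_sin; pose proof (sin_sq_le_sq (x / 2)); nra.
Qed.

Lemma sub_sin_ge_cube x : 0 <= x -> x ^ 2 <= 4 / 3 -> 7 / 45 * x ^ 3 <= x - sin x.
Proof.
  intros Hx Hx2.
  assert (HxPI : x <= PI) by (pose proof PI2_3_2; nra).
  destruct (sin_bound x 0 Hx HxPI) as [_ Hub].
  unfold sin_approx, sin_term in Hub; cbn -[pow] in Hub.
  assert (0 <= x ^ 3) by (apply pow_le; exact Hx).
  assert (x ^ 5 = x ^ 3 * x ^ 2) by ring.
  nra.
Qed.

Lemma unit_vector_angle x y : x ^ 2 + y ^ 2 = 1 ->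
  exists th, - PI <= th <= PI /\ cos th = x /\ sin th = y.
Proof.
  intros H.
  assert (Hx : -1 <= x <= 1) by nra.
  assert (Hs : sin (acos x) = Rabs y).
  { rewrite sin_acos by exact Hx. rewrite <- sqrt_Rsqr_abs; f_equal; unfold Rsqr; lra. }
  pose proof (acos_bound x).
  destruct (Rle_dec 0 y).
  - exists (acos x); rewrite cos_acos, Hs, Rabs_right by lra; repeat split; lra.
  - exists (- acos x); rewrite cos_neg, sin_neg, cos_acos, Hs, Rabs_left by lra.
    repeat split; lra.
Qed.

Lemma Qd_on delta z t : 0 < delta ->
  (IZR z - / 2) * delta <= t < (IZR z + / 2) * delta -> Qd delta t = delta * IZR z.
Proof.
  intros Hd [Hlo Hhi]; unfold Qd, Rfloor.
  replace (up (t / delta + / 2) - 1)%Z with z; [reflexivity|].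
  assert (Hs : t / delta + / 2 = (t + delta / 2) / delta) by (field; lra).
  rewrite <- (tech_up _ (z + 1)); [ring | |]; rewrite plus_IZR, Hs.
  - apply Rmult_lt_reg_r with delta; [lra|]; field_simplify; lra.
  - apply Rmult_le_reg_r with delta; [lra|]; field_simplify; lra.
Qed.

(** * One period of the quantized cosine *)

Definition Qd_moment (delta t : R) : R := t * (t - Qd delta t).

(* The lower bound for the integral of [Qd_moment delta (r cos phi)] over a period. *)
Definition kappa (delta r : R) : R := 16 * sqrt 2 / (3 * PI ^ 2) * (delta * sqrt delta) * sqrt r.

Lemma kappa_nonneg delta r : 0 <= delta -> 0 <= kappa delta r.
Proof.
  intros Hd; unfold kappa; pose proof PI_RGT_0.
  pose proof (sqrt_pos 2); pose proof (sqrt_pos delta); pose proof (sqrt_pos r).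
  assert (0 < 3 * PI ^ 2) by nra.
  apply Rmult_le_pos; [apply Rmult_le_pos; [apply Rdiv_le_0_compat|] |]; nra.
Qed.

Lemma kappa_le_half_disc delta : 0 < delta -> kappa delta (delta / 2) <= (delta / 2) ^ 2 * PI.
Proof.
  intros Hd; unfold kappa; rewrite sqrt_div_alt by lra.
  assert (Hw : 0 < sqrt 2) by (apply sqrt_lt_R0; lra).
  assert (Hs : delta = sqrt delta * sqrt delta) by (rewrite sqrt_sqrt; lra).
  set (s := sqrt delta) in *; clearbody s; subst delta.
  pose proof PI2_3_2.
  apply Rmult_le_reg_r with (3 * PI ^ 2); [nra|].
  field_simplify; [|nra..].
  assert (0 < s ^ 4) by (replace (s ^ 4) with ((s * s) * (s * s)) by ring; nra).
  assert (27 < PI ^ 3) by nra; nra.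
Qed.

(* With u = delta / r and x = sqrt (2 u): acos (1 - u) >= x since cos x >= 1 - x^2/2,
   then x - sin x >= 7/45 x^3, and r^2 x^3 = 2 sqrt 2 delta^(3/2) sqrt r. *)
Lemma kappa_le_caps delta r : 0 < delta -> 3 / 2 * delta <= r ->
  kappa delta r <= 2 * r ^ 2 * (acos (1 - delta / r) - sin (acos (1 - delta / r))).
Proof.
  intros Hd Hr.
  set (p := acos (1 - delta / r)).
  assert (Hu : 0 < delta / r <= 2 / 3).
  { split; [apply Rdiv_lt_0_compat; lra|].
    apply Rmult_le_reg_r with r; [lra|]; field_simplify; lra. }
  set (x := sqrt (2 * (delta / r))).
  assert (Hx2 : x ^ 2 = 2 * (delta / r)) by (unfold x; rewrite pow2_sqrt; lra).
  assert (Hx0 : 0 <= x) by apply sqrt_pos.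
  assert (Hp : 0 <= p <= PI) by apply acos_bound.
  assert (Hxp : x <= p).
  { apply cos_decr_0; try lra.
    - pose proof PI2_3_2; nra.
    - unfold p; rewrite cos_acos by lra; pose proof (cos_ge_1_sub_sq_half x); lra. }
  pose proof (sub_sin_mono x p Hxp); pose proof (sub_sin_ge_cube x Hx0 ltac:(lra)).
  assert (Hcube : r ^ 2 * x ^ 3 = 2 * sqrt 2 * (delta * sqrt delta) * sqrt r).
  { unfold x; rewrite sqrt_mult, sqrt_div_alt by lra.
    assert (Hrho : 0 < sqrt r) by (apply sqrt_lt_R0; lra).
    assert (Hs : sqrt delta * sqrt delta = delta) by (apply sqrt_sqrt; lra).
    assert (Hr2 : sqrt r * sqrt r = r) by (apply sqrt_sqrt; lra).
    assert (Hw : sqrt 2 * sqrt 2 = 2) by (apply sqrt_sqrt; lra).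
    set (s := sqrt delta) in *; set (rho := sqrt r) in *; set (w := sqrt 2) in *.
    rewrite <- Hs, <- Hr2.
    replace ((w * (s / rho)) ^ 3) with ((w * w) * w * (s * s * s) / (rho * rho * rho))
      by (field; lra).
    rewrite Hw; field; lra. }
  assert (Hpos : 0 <= sqrt 2 * (delta * sqrt delta) * sqrt r).
  { repeat apply Rmult_le_pos; try apply sqrt_pos; lra. }
  assert (Hc : 16 / (3 * PI ^ 2) <= 16 / 27).
  { pose proof PI2_3_2; apply Rmult_le_compat_l; [lra|]; apply Rinv_le_contravar; nra. }
  unfold kappa; fold p.
  replace (16 * sqrt 2 / (3 * PI ^ 2) * (delta * sqrt delta) * sqrt r)
    with (16 / (3 * PI ^ 2) * (sqrt 2 * (delta * sqrt delta) * sqrt r)) by (field; apply PI_neq0).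
  assert (0 <= r ^ 2) by nra.
  nra.
Qed.

Section HalfIntegerRadius.

Variables (delta r : R) (M : nat).
Hypotheses (Hdelta : 0 < delta) (HM : (1 <= M)%nat) (Hr : r = (INR M - / 2) * delta).

(* [breakpoint k], k = 0 .. 2M-1, are the angles in [0, PI] at which [r cos] crosses a
   discontinuity of [Qd delta]; they run from 0 to PI because 2r = (2M-1) delta. *)
Definition breakpoint (k : nat) : R := acos (1 - INR k * delta / r).

Lemma radius_pos : 0 < r.
Proof. apply le_INR in HM; simpl in HM; subst r; nra. Qed.

Lemma breakpoint_arg_bound k : (k <= 2 * M - 1)%nat -> -1 <= 1 - INR k * delta / r <= 1.
Proof.
  intros Hk; pose proof radius_pos.
  assert (H2M : (1 <= 2 * M)%nat) by lia.
  apply le_INR in Hk, HM; rewrite minus_INR, mult_INR in Hk by exact H2M; simpl in Hk, HM.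
  pose proof (pos_INR k).
  assert (INR k * delta / r * r = INR k * delta) by (field; lra).
  assert (0 <= INR k * delta / r) by (apply Rdiv_le_0_compat; nra).
  subst r; split; nra.
Qed.

Lemma cos_breakpoint k : (k <= 2 * M - 1)%nat -> cos (breakpoint k) = 1 - INR k * delta / r.
Proof. intros Hk; apply cos_acos, breakpoint_arg_bound, Hk. Qed.

Lemma breakpoint_0 : breakpoint 0 = 0.
Proof. unfold breakpoint, Rdiv; simpl INR; rewrite !Rmult_0_l, Rminus_0_r; apply acos_1. Qed.

Lemma breakpoint_1 : breakpoint 1 = acos (1 - delta / r).
Proof. unfold breakpoint; simpl INR; rewrite Rmult_1_l; reflexivity. Qed.

Lemma breakpoint_reflect k : (k <= 2 * M - 1)%nat ->
  breakpoint (2 * M - 1 - k) = PI - breakpoint k.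
Proof.
  intros Hk; pose proof radius_pos.
  unfold breakpoint; rewrite <- acos_opp; f_equal.
  rewrite !minus_INR, mult_INR by lia; simpl.
  pose proof (le_INR _ _ HM); simpl in *; subst r; field; lra.
Qed.

Lemma breakpoint_last : breakpoint (2 * M - 1) = PI.
Proof.
  rewrite <- (Nat.sub_0_r (2 * M - 1)), breakpoint_reflect, breakpoint_0 by lia; ring.
Qed.

Lemma breakpoint_mono k : (S k <= 2 * M - 1)%nat -> breakpoint k <= breakpoint (S k).
Proof.
  intros Hk; pose proof radius_pos.
  apply cos_decr_0; try apply acos_bound.
  rewrite !cos_breakpoint, S_INR by lia.
  apply Rplus_le_compat_l, Ropp_le_contravar; unfold Rdiv.
  apply Rmult_le_compat_r; [left; apply Rinv_0_lt_compat; lra | nra].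
Qed.

Lemma Qd_cos_on_piece k phi : (S k <= 2 * M - 1)%nat ->
  breakpoint k < phi < breakpoint (S k) ->
  Qd delta (r * cos phi) = r * (cos (breakpoint k) + cos (breakpoint (S k))) / 2.
Proof.
  intros Hk Hphi; pose proof radius_pos.
  pose proof (acos_bound (1 - INR k * delta / r)).
  pose proof (acos_bound (1 - INR (S k) * delta / r)).
  fold (breakpoint k) (breakpoint (S k)) in *.
  assert (Hlo : cos (breakpoint (S k)) < cos phi) by (apply cos_decreasing_1; lra).
  assert (Hhi : cos phi < cos (breakpoint k)) by (apply cos_decreasing_1; lra).
  rewrite !cos_breakpoint, S_INR in * by lia.
  assert (Hz : IZR (Z.of_nat M - 1 - Z.of_nat k) = INR M - 1 - INR k).
  { rewrite !minus_IZR, <- !INR_IZR_INZ; reflexivity. }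
  assert (Hrk : forall c, r * (1 - c * delta / r) = r - c * delta) by (intros; field; lra).
  assert (Ht_lo : r - (INR k + 1) * delta < r * cos phi)
    by (rewrite <- Hrk; apply Rmult_lt_compat_l; lra).
  assert (Ht_hi : r * cos phi < r - INR k * delta)
    by (rewrite <- Hrk; apply Rmult_lt_compat_l; lra).
  rewrite (Qd_on delta (Z.of_nat M - 1 - Z.of_nat k)), Hz by (rewrite ?Hz; lra).
  replace (r * (1 - INR k * delta / r + (1 - (INR k + 1) * delta / r)) / 2)
    with (r - (INR k + / 2) * delta) by (field; lra).
  rewrite Hr; field.
Qed.

Lemma is_RInt_Qd_cos_piece k : (S k <= 2 * M - 1)%nat ->
  is_RInt (fun phi => Qd delta (r * cos phi)) (breakpoint k) (breakpoint (S k))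
    ((breakpoint (S k) - breakpoint k) * (r * (cos (breakpoint k) + cos (breakpoint (S k))) / 2)).
Proof.
  intros Hk.
  apply (is_RInt_ext (fun _ => r * (cos (breakpoint k) + cos (breakpoint (S k))) / 2)).
  - rewrite Rmin_left, Rmax_right by (apply breakpoint_mono, Hk).
    intros phi Hphi; symmetry; apply Qd_cos_on_piece; assumption.
  - exact (is_RInt_const _ _ _).
Qed.

Lemma is_RInt_Qd_moment_cos_piece k : (S k <= 2 * M - 1)%nat ->
  is_RInt (fun phi => Qd_moment delta (r * cos phi)) (breakpoint k) (breakpoint (S k))
    (r ^ 2 * (breakpoint (S k) - breakpoint k - sin (breakpoint (S k) - breakpoint k)) / 2).
Proof.
  intros Hk.
  apply (is_RInt_ext (fun phi =>
    r * cos phi * (r * cos phi - r * (cos (breakpoint k) + cos (breakpoint (S k))) / 2))).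
  - rewrite Rmin_left, Rmax_right by (apply breakpoint_mono, Hk).
    intros phi Hphi; unfold Qd_moment; rewrite (Qd_cos_on_piece k phi Hk Hphi); reflexivity.
  - apply is_RInt_cos_midpoint.
Qed.

Lemma ex_RInt_Qd_cos : ex_RInt (fun phi => Qd delta (r * cos phi)) (- PI) PI.
Proof.
  pose proof (is_RInt_chain _ breakpoint _ (2 * M - 1)
                (fun k Hk => is_RInt_Qd_cos_piece k ltac:(lia))) as Hhalf.
  rewrite breakpoint_0, breakpoint_last in Hhalf.
  eexists; apply is_RInt_even; [intros phi; rewrite cos_neg; reflexivity | exact Hhalf].
Qed.

(* Every piece contributes r^2 (d - sin d) / 2 >= 0, where d is its length; the two
   extreme pieces (the caps around phi = 0 and phi = PI) have length [breakpoint 1]. *)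
Lemma is_RInt_Qd_moment_cos_ge :
  exists I : R, is_RInt (fun phi => Qd_moment delta (r * cos phi)) (- PI) PI I /\ kappa delta r <= I.
Proof.
  set (v := fun k => r ^ 2 * (breakpoint (S k) - breakpoint k
                               - sin (breakpoint (S k) - breakpoint k)) / 2).
  pose proof (is_RInt_chain _ breakpoint v (2 * M - 1)
                (fun k Hk => is_RInt_Qd_moment_cos_piece k ltac:(lia))) as Hhalf.
  rewrite breakpoint_0, breakpoint_last in Hhalf.
  eexists; split; [apply is_RInt_even; [intros phi; rewrite cos_neg; reflexivity | exact Hhalf]|].
  destruct (Nat.eq_dec M 1) as [HM1 | HM2].
  - assert (Hb1 : breakpoint 1 = PI) by (rewrite <- breakpoint_last; f_equal; lia).
    assert (Hr1 : r = delta / 2) by (rewrite Hr, HM1; simpl; field).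
    replace (2 * M - 1)%nat with 1%nat by lia.
    rewrite sumN_S, sumN_O; unfold v; rewrite Hb1, breakpoint_0, Rminus_0_r, sin_PI, Rminus_0_r.
    pose proof (kappa_le_half_disc delta Hdelta); rewrite <- Hr1 in *; lra.
  - assert (Hv : forall k, (k < 2 * M - 1)%nat -> 0 <= v k).
    { intros k Hk; unfold v; pose proof (breakpoint_mono k ltac:(lia)).
      pose proof (sub_sin_mono 0 (breakpoint (S k) - breakpoint k) ltac:(lra)).
      rewrite sin_0 in *; nra. }
    pose proof (sumN_ge_first_last (2 * M - 1) v ltac:(lia) Hv) as Hsum.
    unfold v in Hsum.
    replace (S (2 * M - 1 - 1)) with (2 * M - 1)%nat in Hsum by lia.
    rewrite breakpoint_last, breakpoint_reflect, breakpoint_0 in Hsum by lia.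
    replace (PI - (PI - breakpoint 1)) with (breakpoint 1 - 0) in Hsum by ring.
    rewrite Rminus_0_r in Hsum; fold v in Hsum.
    assert (Hr2 : 3 / 2 * delta <= r).
    { assert (2 <= INR M) by (apply (le_INR 2); lia). rewrite Hr; nra. }
    pose proof (kappa_le_caps delta r Hdelta Hr2); rewrite <- breakpoint_1 in *; lra.
Qed.

End HalfIntegerRadius.

(** * The frame error *)

Lemma is_RInt_cos_rotated (g : R -> R) r x y (I : R) : x ^ 2 + y ^ 2 = 1 ->
  is_RInt (fun phi => g (r * cos phi)) (- PI) PI I ->
  is_RInt (fun psi => g (r * cos psi * x + r * sin psi * y)) 0 (2 * PI) I.
Proof.
  intros Hxy Hg.
  destruct (unit_vector_angle x y Hxy) as (th & Hth & Hc & Hs).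
  apply (is_RInt_ext (fun psi => g (r * cos (psi + - th)))).
  { intros psi _; rewrite cos_plus, cos_neg, sin_neg, Hc, Hs; f_equal; ring. }
  apply (is_RInt_periodic (fun phi => g (r * cos phi)) (2 * PI) (- PI)).
  - intros phi; rewrite cos_plus, cos_2PI, sin_2PI; f_equal; ring.
  - lra.
  - replace (- PI + 2 * PI) with PI by ring; exact Hg.
Qed.

Lemma ex_RInt_sumN (F : nat -> R -> R) N a b :
  (forall j, (j < N)%nat -> ex_RInt (F j) a b) ->
  ex_RInt (fun x => sumN N (fun j => F j x)) a b.
Proof.
  intros H; eexists; apply (is_RInt_sumN F (fun j => RInt (F j) a b)).
  intros j Hj; exact (RInt_correct _ _ _ (H j Hj)).
Qed.

Lemma UNTF_unit_norm N ex ey j : is_UNTF N ex ey -> (j < N)%nat -> ex j ^ 2 + ey j ^ 2 = 1.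
Proof.
  intros [Hnorm _] Hj; specialize (Hnorm j Hj).
  rewrite <- (pow2_sqrt (ex j ^ 2 + ey j ^ 2)), Hnorm by nra; ring.
Qed.

Lemma UNTF_sum_sq N ex ey x1 x2 : is_UNTF N ex ey ->
  sumN N (fun j => (x1 * ex j + x2 * ey j) ^ 2) = INR N / 2 * (x1 ^ 2 + x2 ^ 2).
Proof.
  intros (_ & Sxx & Sxy & Syx & Syy).
  rewrite (sumN_ext N _ (fun j => x1 ^ 2 * (ex j * ex j) + (x1 * x2 * (ex j * ey j)
            + (x1 * x2 * (ey j * ex j) + x2 ^ 2 * (ey j * ey j)))))
    by (intros; ring).
  rewrite !sumN_plus, !sumN_scal, Sxx, Sxy, Syx, Syy; field.
Qed.

Lemma Edelta_sq_ge delta N ex ey x1 x2 lam : (1 <= N)%nat -> is_UNTF N ex ey ->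
  2 * lam * (2 / INR N * sumN N (fun j => Qd_moment delta (x1 * ex j + x2 * ey j)))
    - lam ^ 2 * (x1 ^ 2 + x2 ^ 2) <= Edelta delta N ex ey x1 x2 ^ 2.
Proof.
  intros HN Hframe.
  assert (HN0 : 0 < INR N) by (apply lt_0_INR; lia).
  set (c := fun j => Qd delta (x1 * ex j + x2 * ey j)).
  set (y1 := x1 - 2 / INR N * sumN N (fun j => c j * ex j)).
  set (y2 := x2 - 2 / INR N * sumN N (fun j => c j * ey j)).
  assert (HE : Edelta delta N ex ey x1 x2 ^ 2 = y1 ^ 2 + y2 ^ 2).
  { unfold Edelta; cbv zeta.
    rewrite pow2_sqrt by (apply Rplus_le_le_0_compat; apply pow2_ge_0); reflexivity. }
  assert (Hmoment : sumN N (fun j => Qd_moment delta (x1 * ex j + x2 * ey j))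
    = INR N / 2 * (x1 ^ 2 + x2 ^ 2)
      - (x1 * sumN N (fun j => c j * ex j) + x2 * sumN N (fun j => c j * ey j))).
  { rewrite (sumN_ext N _ (fun j => (x1 * ex j + x2 * ey j) ^ 2
                  + -1 * (x1 * (c j * ex j) + x2 * (c j * ey j))))
      by (intros; unfold Qd_moment, c; ring).
    rewrite sumN_plus, sumN_scal, sumN_plus, !sumN_scal, UNTF_sum_sq by exact Hframe; ring. }
  rewrite HE, Hmoment; unfold y1, y2.
  set (S1 := sumN N (fun j => c j * ex j)); set (S2 := sumN N (fun j => c j * ey j)).
  assert (Hk : 2 / INR N * (INR N / 2 * (x1 ^ 2 + x2 ^ 2)) = x1 ^ 2 + x2 ^ 2) by (field; lra).
  rewrite Rmult_minus_distr_l, Hk.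
  pose proof (pow2_ge_0 (x1 - 2 / INR N * S1 - lam * x1));
    pose proof (pow2_ge_0 (x2 - 2 / INR N * S2 - lam * x2)).
  nra.
Qed.

(* [k / (PI r^2)] is the [lam] maximising [2 lam (2 k) - 2 PI lam^2 r^2]. *)
Lemma optimal_quadratic_bound k S r : 0 < r -> 0 <= k -> 2 * k <= S ->
  2 * k ^ 2 / (PI * r ^ 2) <= 2 * (k / (PI * r ^ 2)) * S - 2 * PI * ((k / (PI * r ^ 2)) ^ 2 * r ^ 2).
Proof.
  intros Hr Hk HS; pose proof PI_RGT_0.
  assert (Hpr : 0 < PI * r ^ 2) by (apply Rmult_lt_0_compat, pow_lt; lra).
  replace (2 * k ^ 2 / (PI * r ^ 2))
    with (2 * (k / (PI * r ^ 2)) * (2 * k) - 2 * PI * ((k / (PI * r ^ 2)) ^ 2 * r ^ 2))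
    by (field; lra).
  apply Rplus_le_compat_r, Rmult_le_compat_l; [apply Rmult_le_pos, Rdiv_le_0_compat|]; lra.
Qed.

Section FrameError.

Variables (delta r : R) (M N : nat) (ex ey : nat -> R).
Hypotheses (Hdelta : 0 < delta) (HM : (1 <= M)%nat) (Hr : r = (INR M - / 2) * delta)
  (HN : (1 <= N)%nat) (Hframe : is_UNTF N ex ey).

Let t (j : nat) (psi : R) : R := r * cos psi * ex j + r * sin psi * ey j.

Lemma ex_RInt_Esq_integrand : ex_RInt (Esq_integrand delta r N ex ey) 0 (2 * PI).
Proof.
  assert (HQ : forall j, (j < N)%nat -> ex_RInt (fun psi => Qd delta (t j psi)) 0 (2 * PI)).
  { intros j Hj; destruct (ex_RInt_Qd_cos delta r M Hdelta HM Hr) as [I HI].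
    exists I; apply is_RInt_cos_rotated, HI; exact (UNTF_unit_norm N ex ey j Hframe Hj). }
  assert (Hcoord : forall (u : R -> R) (e : nat -> R), (forall x, continuous u x) ->
    ex_RInt (fun psi => (u psi - 2 / INR N * sumN N (fun j => Qd delta (t j psi) * e j)) ^ 2)
      0 (2 * PI)).
  { intros u e Hu; apply ex_RInt_square, (ex_RInt_minus (V := R_NormedModule)).
    - apply (ex_RInt_continuous (V := R_CompleteNormedModule)); intros; apply Hu.
    - apply (ex_RInt_scal (V := R_NormedModule)), ex_RInt_sumN; intros j Hj.
      apply (ex_RInt_ext (fun psi => e j * Qd delta (t j psi))); [intros; apply Rmult_comm|].
      apply (ex_RInt_scal (V := R_NormedModule)), HQ, Hj. }
  apply (ex_RInt_ext (fun psi =>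
    (r * cos psi - 2 / INR N * sumN N (fun j => Qd delta (t j psi) * ex j)) ^ 2
    + (r * sin psi - 2 / INR N * sumN N (fun j => Qd delta (t j psi) * ey j)) ^ 2)).
  - intros psi _; unfold Esq_integrand, Edelta; cbv zeta.
    rewrite pow2_sqrt by (apply Rplus_le_le_0_compat; apply pow2_ge_0); reflexivity.
  - apply (ex_RInt_plus (V := R_NormedModule)); apply Hcoord;
      intros; apply continuity_pt_filterlim; reg.
Qed.

Lemma RInt_Esq_integrand_ge :
  2 * kappa delta r ^ 2 / (PI * r ^ 2) <= RInt (Esq_integrand delta r N ex ey) 0 (2 * PI).
Proof.
  pose proof (radius_pos delta r M Hdelta HM Hr) as Hr0; pose proof PI_RGT_0.
  assert (HN0 : 0 < INR N) by (apply lt_0_INR; lia).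
  set (I := fun j => RInt (fun psi => Qd_moment delta (t j psi)) 0 (2 * PI)).
  assert (HI : forall j, (j < N)%nat ->
    is_RInt (fun psi => Qd_moment delta (t j psi)) 0 (2 * PI) (I j) /\ kappa delta r <= I j).
  { intros j Hj; destruct (is_RInt_Qd_moment_cos_ge delta r M Hdelta HM Hr) as (J & HJ & HkJ).
    assert (HJ' := is_RInt_cos_rotated _ r _ _ J (UNTF_unit_norm N ex ey j Hframe Hj) HJ).
    unfold I, t; rewrite (is_RInt_unique _ _ _ _ HJ'); split; assumption. }
  assert (Hmean : 2 * kappa delta r <= 2 / INR N * sumN N I).
  { replace (2 * kappa delta r) with (2 / INR N * (INR N * kappa delta r)) by (field; lra).
    apply Rmult_le_compat_l; [apply Rdiv_le_0_compat; lra|].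
    apply sumN_ge_const; intros j Hj; apply HI, Hj. }
  set (lam := kappa delta r / (PI * r ^ 2)).
  set (lower := fun psi =>
    2 * lam * (2 / INR N * sumN N (fun j => Qd_moment delta (t j psi))) - lam ^ 2 * r ^ 2).
  assert (Hlower : is_RInt lower 0 (2 * PI)
    (2 * lam * (2 / INR N * sumN N I) - (2 * PI - 0) * (lam ^ 2 * r ^ 2))).
  { apply (is_RInt_minus (V := R_NormedModule)); [|exact (is_RInt_const _ _ _)].
    do 2 apply (is_RInt_scal (V := R_NormedModule)).
    apply is_RInt_sumN; intros j Hj; apply HI, Hj. }
  apply Rle_trans with (RInt lower 0 (2 * PI)).
  - rewrite (is_RInt_unique _ _ _ _ Hlower), Rminus_0_r; unfold lam.
    apply optimal_quadratic_bound; [lra | apply kappa_nonneg; lra | exact Hmean].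
  - apply RInt_le; [lra | eexists; exact Hlower | apply ex_RInt_Esq_integrand |].
    intros psi _; unfold lower, Esq_integrand.
    replace (lam ^ 2 * r ^ 2) with (lam ^ 2 * ((r * cos psi) ^ 2 + (r * sin psi) ^ 2))
      by (f_equal; pose proof (sin2_cos2 psi); unfold Rsqr in *; nra).
    apply Edelta_sq_ge; assumption.
Qed.

End FrameError.

Lemma Rpower_add_half x n : 0 < x -> Rpower x (INR n + / 2) = x ^ n * sqrt x.
Proof. intros Hx; rewrite Rpower_plus, Rpower_pow, Rpower_sqrt by exact Hx; reflexivity. Qed.

Lemma pow2_mult_sqrt a x : 0 <= x -> (a * sqrt x) ^ 2 = a ^ 2 * x.
Proof. intros Hx; rewrite Rpow_mult_distr, pow2_sqrt by exact Hx; reflexivity. Qed.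

Lemma kappa_sq delta r : 0 <= delta -> 0 <= r ->
  kappa delta r ^ 2 = 512 / (9 * PI ^ 4) * delta ^ 3 * r.
Proof.
  intros Hd Hr; unfold kappa; rewrite pow2_mult_sqrt by exact Hr.
  replace (16 * sqrt 2 / (3 * PI ^ 2) * (delta * sqrt delta))
    with (16 / (3 * PI ^ 2) * delta * sqrt 2 * sqrt delta) by (field; apply PI_neq0).
  rewrite !pow2_mult_sqrt by lra; field; apply PI_neq0.
Qed.

Lemma lower_bound_sq delta r : 0 < delta -> 0 < r ->
  (32 / (3 * Rpower PI (5 / 2)) * (Rpower delta (3 / 2) / sqrt r)) ^ 2
  = 2 * kappa delta r ^ 2 / (PI * r ^ 2).
Proof.
  intros Hd Hr; pose proof PI_RGT_0.
  assert (0 < sqrt r) by (apply sqrt_lt_R0; lra).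
  assert (0 < sqrt PI) by (apply sqrt_lt_R0; lra).
  replace (5 / 2) with (INR 2 + / 2) by (simpl; field).
  replace (3 / 2) with (INR 1 + / 2) by (simpl; field).
  rewrite !Rpower_add_half, kappa_sq by lra.
  replace (32 / (3 * (PI ^ 2 * sqrt PI)) * (delta ^ 1 * sqrt delta / sqrt r))
    with (32 * delta / (3 * PI ^ 2) * sqrt delta * / (sqrt PI * sqrt r)) by (field; lra).
  rewrite Rpow_mult_distr, pow2_mult_sqrt, pow_inv, Rpow_mult_distr, !pow2_sqrt by lra.
  field; lra.
Qed.

Lemma half_integer_radius r delta (k : Z) : 0 < r -> 0 < delta -> r / delta + / 2 = IZR k ->
  exists M, (1 <= M)%nat /\ r = (INR M - / 2) * delta.
Proof.
  intros Hr Hd Hk.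
  assert (Hk1 : (0 < k)%Z).
  { apply lt_IZR; rewrite <- Hk; assert (0 < r / delta) by (apply Rdiv_lt_0_compat; lra).
    pose proof Rinv_0_lt_compat 2; lra. }
  exists (Z.to_nat k); split; [lia|].
  rewrite INR_IZR_INZ, Z2Nat.id, <- Hk by lia; field; lra.
Qed.

Theorem theorem1p2 (r delta : R) (N : nat) (ex ey : nat -> R) :
  0 < r -> 0 < delta ->
  (exists k : Z, r / delta + / 2 = IZR k) ->
  (1 <= N)%nat ->
  is_UNTF N ex ey ->
  exists pr : Riemann_integrable (Esq_integrand delta r N ex ey) 0 (2 * PI),
    sqrt (RiemannInt pr) >=
      32 / (3 * Rpower PI (5 / 2)) * (Rpower delta (3 / 2) / sqrt r).
Proof.
  intros Hr Hd [k Hk] HN Hframe.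
  destruct (half_integer_radius r delta k Hr Hd Hk) as (M & HM & HrM).
  pose proof (ex_RInt_Esq_integrand delta r M N ex ey Hd HM HrM Hframe) as Hex.
  exists (ex_RInt_Reals_0 _ _ _ Hex); rewrite <- RInt_Reals.
  set (T := 32 / (3 * Rpower PI (5 / 2)) * (Rpower delta (3 / 2) / sqrt r)).
  assert (HT : 0 <= T).
  { unfold T, Rpower; pose proof (exp_pos (5 / 2 * ln PI)); pose proof (exp_pos (3 / 2 * ln delta)).
    pose proof (sqrt_lt_R0 r Hr).
    apply Rmult_le_pos; apply Rlt_le, Rdiv_lt_0_compat; lra. }
  apply Rle_ge; rewrite <- (sqrt_pow2 T HT); apply sqrt_le_1_alt.
  unfold T; rewrite lower_bound_sq by assumption.
  exact (RInt_Esq_integrand_ge delta r M N ex ey Hd HM HrM HN Hframe).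
Qed.
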